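(* Let $h:X\to X$ be a minimal homeomorphism of a compact connected Hausdorff space $X$ and let $\chi$ be an eigenfunction of $h$ whose image contains more than one point. Then $\chi$ is surjective.
   Context: An eigenfunction of $h$ is a continuous map $\chi:X\to\mathbb{R}/\mathbb{Z}$ such that $\chi\circ h=R_\alpha\circ\chi$ for some $\alpha\in\mathbb{R}/\mathbb{Z}$, where $R_\alpha(x)=x+\alpha$ is the rotation by $\alpha$. *)

From HB Require Import structures.
From mathcomp Require Import all_boot all_order all_algebra.
From mathcomp Require Import all_classical all_reals all_analysis.
Set Implicit Arguments. Unset Strict Implicit. Unset Printing Implicit Defensive.
Import Order.TTheory GRing.Theory Num.Theory.
Import numFieldNormedType.Exports.
Local Open Scope classical_set_scope.
Local Open Scope ring_scope.

(* The circle R/Z is modelled by real representatives: a point of R/Z is the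
   class of a real number, two reals denote the same point iff they differ by
   an integer, and the topology of R/Z is that of the quotient metric
   d([a],[b]) = dist(a - b, Z). *)

Definition eqZ {R : realType} (a b : R) : Prop := exists k : int, a - b = k%:~R.

Definition fracR {R : realType} (x : R) : R := x - (Num.floor x)%:~R.

Definition cdist {R : realType} (a b : R) : R :=
  Num.min (fracR (a - b)) (1 - fracR (a - b)).

Definition continuous_RZ {R : realType} {X : topologicalType} (chi : X -> R) : Prop :=
  forall (x : X) (e : R), 0 < e -> \forall y \near x, cdist (chi y) (chi x) < e.

Definition eigenfunction {R : realType} {X : topologicalType}
  (h : X -> X) (chi : X -> R) : Prop :=
  continuous_RZ chi /\ exists alpha : R, forall x, eqZ (chi (h x)) (chi x + alpha).

Definition homeomorphism {X : topologicalType} (h : X -> X) : Prop :=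
  exists g : X -> X, [/\ cancel h g, cancel g h, continuous h & continuous g].

(* full (two-sided) orbit of x under a bijection h : {h^n x | n in Z} *)
Definition full_orbit {X : Type} (h : X -> X) (x : X) : set X :=
  [set y | exists n : nat, y = iter n h x \/ iter n h y = x].

Definition minimal_map {X : topologicalType} (h : X -> X) : Prop :=
  forall x : X, closure (full_orbit h x) = [set: X].

From HB Require Import structures.
From mathcomp Require Import all_boot all_order all_algebra.
From mathcomp Require Import all_classical all_reals all_analysis.
From mathcomp Require Import ring lra.
Set Implicit Arguments.
Unset Strict Implicit.
Unset Printing Implicit Defensive.
Import Order.TTheory GRing.Theory Num.Theory.
Import numFieldNormedType.Exports.
Local Open Scope classical_set_scope.
Local Open Scope ring_scope.

(* If chi missed a point t of R/Z, then psi := frac (chi - t) would be a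
   continuous real lift of chi - t with values in (0, 1).  The function
   psi o h - psi is continuous and constant modulo Z (it is alpha mod Z), hence
   constant on the connected space X; evaluating it at a maximum and at a
   minimum of psi (X is compact) shows that this constant is 0.  So psi is
   h-invariant, hence constant on the closure of every orbit, i.e. constant by
   minimality, and chi would be constant in R/Z. *)

Section FracR.
Context {R : realType}.
Implicit Types a b s t alpha e : R.

Lemma fracR_ge0 a : 0 <= fracR a.
Proof. by rewrite /fracR subr_ge0 floor_le. Qed.

Lemma fracR_lt1 a : fracR a < 1.
Proof. have := floorD1_gt a; rewrite /fracR intrD; lra. Qed.

Lemma fracR_unique a (k : int) s : 0 <= s < 1 -> a = k%:~R + s -> fracR a = s.
Proof.
move=> /andP[s0 s1] ->; rewrite /fracR.
have -> : Num.floor (k%:~R + s) = k.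
  by apply: floor_def; rewrite intrD; apply/andP; split; lra.
ring.
Qed.

Lemma fracR_gt0 a b : ~ eqZ a b -> 0 < fracR (a - b).
Proof.
move=> neq_ab; rewrite lt_neqAle fracR_ge0 andbT eq_sym.
apply/eqP => frac0; apply: neq_ab; exists (Num.floor (a - b)).
by move: frac0; rewrite /fracR; lra.
Qed.

Lemma eqZ_fracR a b : fracR a = fracR b -> eqZ a b.
Proof.
by rewrite /fracR => eq_frac; exists (Num.floor a - Num.floor b); rewrite intrB; lra.
Qed.

Lemma eqZ_fracR_drift a b t alpha :
  eqZ a (b + alpha) -> eqZ (fracR (a - t) - fracR (b - t)) alpha.
Proof.
move=> [k hk]; exists (k - Num.floor (a - t) + Num.floor (b - t)).
by rewrite /fracR !intrD !intrN; lra.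
Qed.

Lemma eqZ_small a b : `|a - b| < 1 -> eqZ a b -> a = b.
Proof.
move=> small [k hk]; suff k0 : k = 0 by apply/eqP; rewrite -subr_eq0 hk k0.
apply/eqP; apply: contraLR small => k_neq0; rewrite -leNgt hk.
by apply: norm_intr_ge1; [exact: intr_int | rewrite intr_eq0].
Qed.

Lemma cdist_subr a b t : cdist (a - t) (b - t) = cdist a b.
Proof. by rewrite /cdist (_ : a - t - (b - t) = a - b) //; ring. Qed.

(* Away from the cut at 0 = 1, fracR is 1-Lipschitz for the distance of R/Z. *)
Lemma fracR_cdist_lt a b e : cdist a b < e -> e <= fracR b -> e <= 1 - fracR b ->
  `|fracR a - fracR b| < e.
Proof.
rewrite /cdist gt_min => /orP close eb eb1.
have d0 := fracR_ge0 (a - b); have d1 := fracR_lt1 (a - b).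
have b0 := fracR_ge0 b; have b1 := fracR_lt1 b.
case: close => close.
- have -> : fracR a = fracR b + fracR (a - b).
    apply: (@fracR_unique _ (Num.floor b + Num.floor (a - b))).
      by apply/andP; split; lra.
    by rewrite /fracR intrD; lra.
  by rewrite addrC addKr ger0_norm.
- have -> : fracR a = fracR b + fracR (a - b) - 1.
    apply: (@fracR_unique _ (Num.floor b + Num.floor (a - b) + 1)).
      by apply/andP; split; lra.
    by rewrite /fracR !intrD; lra.
  by rewrite ltr_norml; apply/andP; split; lra.
Qed.

End FracR.

Section Lifts.
Context {R : realType} {X : topologicalType}.

Lemma continuous_fracR_subr (chi : X -> R) t :
  continuous_RZ chi -> (forall x, ~ eqZ (chi x) t) ->
  continuous (fun x => fracR (chi x - t)).
Proof.
move=> chic avoid_t x; apply/cvgrPdist_lt => eps eps0.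
pose psi x := fracR (chi x - t).
pose e := Num.min eps (Num.min (psi x) (1 - psi x)).
have e0 : 0 < e by rewrite !lt_min eps0 fracR_gt0 // subr_gt0 fracR_lt1.
have e_le_psi : e <= psi x by rewrite !ge_min lexx orbT.
have e_le_1psi : e <= 1 - psi x by rewrite !ge_min lexx !orbT.
apply: filterS (chic x e e0) => y close.
rewrite distrC; apply: (lt_le_trans (y := e)); last by rewrite ge_min lexx.
by apply: fracR_cdist_lt; rewrite ?cdist_subr.
Qed.

Lemma connected_eqZ_const (f : X -> R) c :
  connected [set: X] -> continuous f -> (forall x, eqZ (f x) c) ->
  forall x y, f x = f y.
Proof.
move=> conX fc f_c x y.
suff level_full : [set z | f z = f x] = [set: X].
  by have /esym : [set z | f z = f x] y by rewrite level_full.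
apply: conX; first by exists x.
- exists [set z | f z = f x]; last by rewrite setTI.
  rewrite openE => z /= fzx.
  have := (cvgrPdist_lt _ _).1 (fc z) (1/2) ltac:(lra).
  apply: filterS => w /= near_w.
  rewrite -fzx; apply: eqZ_small; first by rewrite -normrN opprB; lra.
  have [[k1 h1] [k2 h2]] := (f_c w, f_c z).
  by exists (k1 - k2); rewrite intrB; lra.
- exists [set z | f z = f x]; last by rewrite setTI.
  by apply: (@preimage_closed _ _ f [set r | r = f x]) => // z _; apply: fc.
Qed.

(* The maximum and minimum of psi force the constant to be <= 0 and >= 0. *)
Lemma compact_const_coboundary_eq0 (h : X -> X) (psi : X -> R) (x0 : X) c :
  compact [set: X] -> continuous psi -> (forall x, psi (h x) - psi x = c) ->
  c = 0.
Proof.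
move=> cX psic cob.
have ne : [set: X] !=set0 by exists x0.
have [xM _ maxM] := compact_EVT_max ne cX (continuous_subspaceT psic).
have [xm _ minm] := compact_EVT_min ne cX (continuous_subspaceT psic).
have := maxM (h xM); have := minm (h xm); rewrite !inE => /(_ I) + /(_ I).
by have := cob xM; have := cob xm; lra.
Qed.

End Lifts.

Lemma minimal_invariant_const (X Y : topologicalType) (h : X -> X) (f : X -> Y) :
  hausdorff_space Y -> minimal_map h -> continuous f ->
  (forall x, f (h x) = f x) -> forall x y, f x = f y.
Proof.
move=> hY minh fc f_h x y.
have f_iter n z : f (iter n h z) = f z by elim: n => // n IH; rewrite iterS f_h.
have closed_level : closed (f @^-1` [set f x]).
  apply: preimage_closed => [z _|]; first exact: fc.
  exact/accessible_closed_set1/hausdorff_accessible.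
have orbit_level : full_orbit h x `<=` f @^-1` [set f x].
  by move=> z [n [->|<-]]; rewrite /preimage /= f_iter.
have closure_level : closure (full_orbit h x) `<=` f @^-1` [set f x].
  by rewrite ((closure_id _).1 closed_level); exact: closureS.
by move: closure_level; rewrite minh => /(_ y I) /esym.
Qed.

Theorem lemma5p2 (R : realType) (X : topologicalType) (h : X -> X) (chi : X -> R) :
  compact [set: X] -> connected [set: X] -> hausdorff_space X ->
  homeomorphism h -> minimal_map h ->
  eigenfunction h chi ->
  (exists x y : X, ~ eqZ (chi x) (chi y)) ->
  forall t : R, exists x : X, eqZ (chi x) t.
Proof.
move=> cX conX _ [_ [_ _ hc _]] minh [chic [alpha chi_h]] [x1 [y1 neq_x1y1]] t.
apply: contrapT => no_preimage.
have avoid_t x : ~ eqZ (chi x) t by move=> eq_t; apply: no_preimage; exists x.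
pose psi x := fracR (chi x - t).
have psic : continuous psi := continuous_fracR_subr chic avoid_t.
have cob_const x y : psi (h x) - psi x = psi (h y) - psi y.
  apply: (@connected_eqZ_const _ _ (fun z => psi (h z) - psi z) alpha conX).
    by move=> z; apply: cvgB; [exact: continuous_comp (hc z) (psic (h z)) | exact: psic].
  by move=> z; apply: eqZ_fracR_drift.
have cob0 := compact_const_coboundary_eq0 x1 cX psic (cob_const^~ x1).
have psi_h x : psi (h x) = psi x by have := cob_const x x1; lra.
have psi_const := minimal_invariant_const (@Rhausdorff R) minh psic psi_h.
have [k hk] := eqZ_fracR (psi_const x1 y1).
by apply: neq_x1y1; exists k; lra.
Qed.
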